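(* Let $L_i \ge 1$ be an integer and, for each $\ell \in \{1,\dots,L_i\}$, let $K_\ell \ge 1$ be an integer. For each $\ell$ and each $k \in \{1,\dots,K_\ell\}$ let $\mathbf{c}_{\ell k} \in \mathbb{R}^{d_c}$ (codebook centers) and $\mathbf{o}_{i,\ell k} \in \mathbb{R}^{d_c}$ (capsule outputs) be vectors, and let $c^{(T)}_{i,\ell k} \ge 0$ be routing weights with $\sum_{k=1}^{K_\ell} c^{(T)}_{i,\ell k} = 1$ for each $\ell$. Let $s_{i,\ell} \in \arg\max_k c^{(T)}_{i,\ell k}$. Define $$\hat{\mathbf{x}}^{\mathrm{hard}}_i = \sum_{\ell=1}^{L_i} \mathbf{c}_{\ell s_{i,\ell}}, \qquad \hat{\mathbf{x}}^{\mathrm{soft}}_i = \sum_{\ell=1}^{L_i}\sum_{k=1}^{K_\ell} c^{(T)}_{i,\ell k}\,\mathbf{o}_{i,\ell k}.$$ Assume there are constants $\delta \ge 0$ and $C \ge 0$ with $\|\mathbf{o}_{i,\ell k} - \mathbf{c}_{\ell k}\|_2 \le \delta$ and $\|\mathbf{c}_{\ell k}\|_2 \le C$ for all $\ell, k$. Then $$\big\|\hat{\mathbf{x}}^{\mathrm{soft}}_i - \hat{\mathbf{x}}^{\mathrm{hard}}_i\big\|_2 \le L_i\delta + 2C\sum_{\ell=1}^{L_i}\big(1 - c^{(T)}_{i,\ell s_{i,\ell}}\big),$$ and consequently, for any vector $\mathbf{x}_i \in \mathbb{R}^{d_c}$, $$\big\|\mathbf{x}_i - \hat{\mathbf{x}}^{\mathrm{soft}}_i\big\|_2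 \le \big\|\mathbf{x}_i - \hat{\mathbf{x}}^{\mathrm{hard}}_i\big\|_2 + L_i\delta + 2C\sum_{\ell=1}^{L_i}\big(1 - c^{(T)}_{i,\ell s_{i,\ell}}\big).$$
   Context: In the paper's setting, $c^{(T)}_{i,\ell k}$ are the softmax routing weights of item $i$ over capsules $k$ at SID depth $\ell$ after $T$ routing iterations, $s_{i,\ell}$ is the emitted (argmax) token, $\mathbf{o}_{i,\ell k}$ is the squashed vote of capsule $k$, and $\mathbf{c}_{\ell k}$ is the codebook center of capsule $k$ at depth $\ell$; $\mathbf{x}_i$ is the item embedding, regarded as lying in the same space as the reconstructions. Only the properties listed in the claim are used. *)

From mathcomp Require Import all_boot all_order all_algebra.
From mathcomp Require Import reals.
Set Implicit Arguments. Unset Strict Implicit. Unset Printing Implicit Defensive.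
Import Order.TTheory GRing.Theory Num.Theory.
Local Open Scope ring_scope.

Definition norm2 (R : realType) (d : nat) (v : 'rV[R]_d) : R :=
  Num.sqrt (\sum_(j < d) (v 0 j) ^+ 2).

From mathcomp Require Import all_boot all_order all_algebra.
From mathcomp Require Import reals.
From mathcomp Require Import ring lra.
Import Order.TTheory GRing.Theory Num.Theory.
Local Open Scope ring_scope.

(* At each depth the weights sum to one, so
     sum_k w_k o_k - c_s = sum_k w_k (o_k - c_k) + sum_(k <> s) w_k (c_k - c_s).
   The first sum is a convex combination of vectors of norm at most delta; the
   second carries total weight 1 - w_s on vectors of norm at most 2C.  Summing
   over the depths with the triangle inequality gives the first bound, and the
   second is the triangle inequality once more. *)

Section EuclideanNorm.
Context {R : realType} {d : nat}.
Implicit Types u v : 'rV[R]_d.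

Lemma norm2_ge0 v : 0 <= norm2 v.
Proof. exact: sqrtr_ge0. Qed.

Lemma sum_sqr_ge0 v : 0 <= \sum_(j < d) v 0 j ^+ 2.
Proof. by apply: sumr_ge0 => j _; rewrite sqr_ge0. Qed.

Lemma norm2_sqr v : norm2 v ^+ 2 = \sum_(j < d) v 0 j ^+ 2.
Proof. by rewrite sqr_sqrtr // sum_sqr_ge0. Qed.

Lemma norm2_eq0 v : (norm2 v == 0) = (v == 0).
Proof.
rewrite sqrtr_eq0 le_eqVlt ltNge sum_sqr_ge0 orbF.
apply/idP/eqP => [/eqP sum0 | ->].
  apply/rowP => j; rewrite mxE; apply/eqP; rewrite -sqrf_eq0; apply/eqP.
  exact: (psumr_eq0P (fun j _ => sqr_ge0 (v 0 j)) sum0).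
by rewrite big1 // => j _; rewrite mxE expr0n.
Qed.

Lemma ler_dot_norm2 u v : \sum_(j < d) u 0 j * v 0 j <= norm2 u * norm2 v.
Proof.
have [ab0|] := eqVneq (norm2 u * norm2 v) 0.
  rewrite ab0; move/eqP: ab0; rewrite mulf_eq0 !norm2_eq0 => /orP[] /eqP->;
  by rewrite big1 // => j _; rewrite mxE (mul0r, mulr0).
set a := norm2 u; set b := norm2 v; set S := \sum_(j < d) _ => ab_neq0.
have ab_gt0 : 0 < a * b by rewrite lt_def ab_neq0 mulr_ge0 ?norm2_ge0.
(* 0 <= sum_j (b u_j - a v_j)^2 = 2 a b (a b - S) *)
have : 0 <= \sum_(j < d) (b * u 0 j - a * v 0 j) ^+ 2.
  by apply: sumr_ge0 => j _; rewrite sqr_ge0.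
have -> : \sum_(j < d) (b * u 0 j - a * v 0 j) ^+ 2 =
    b ^+ 2 * \sum_(j < d) u 0 j ^+ 2 - 2 * a * b * S
    + a ^+ 2 * \sum_(j < d) v 0 j ^+ 2.
  rewrite !mulr_sumr -sumrB -big_split /=.
  by apply: eq_bigr => j _; ring.
by rewrite -!norm2_sqr -/a -/b; nra.
Qed.

Lemma ler_norm2D u v : norm2 (u + v) <= norm2 u + norm2 v.
Proof.
rewrite {1}/norm2 -[norm2 u + _]ger0_norm ?addr_ge0 ?norm2_ge0 //.
rewrite -sqrtr_sqr ler_sqrt ?sqr_ge0 //.
have -> : \sum_(j < d) (u + v) 0 j ^+ 2 = \sum_(j < d) u 0 j ^+ 2
    + 2 * \sum_(j < d) u 0 j * v 0 j + \sum_(j < d) v 0 j ^+ 2.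
  rewrite mulr_sumr -!big_split /=.
  by apply: eq_bigr => j _; rewrite !mxE; ring.
rewrite -!norm2_sqr; have := ler_dot_norm2 u v; nra.
Qed.

Lemma norm2Z (a : R) v : norm2 (a *: v) = `|a| * norm2 v.
Proof.
rewrite /norm2 -sqrtr_sqr -sqrtrM ?sqr_ge0 // mulr_sumr.
by congr Num.sqrt; apply: eq_bigr => j _; rewrite !mxE exprMn.
Qed.

Lemma norm2N v : norm2 (- v) = norm2 v.
Proof. by rewrite -scaleN1r norm2Z normrN normr1 mul1r. Qed.

Lemma norm2_0 : norm2 (0 : 'rV[R]_d) = 0.
Proof. by apply/eqP; rewrite norm2_eq0. Qed.

Lemma ler_norm2B u v : norm2 (u - v) <= norm2 u + norm2 v.
Proof. by rewrite -(norm2N v) ler_norm2D. Qed.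

Lemma ler_norm2_sum {I : Type} (r : seq I) (P : pred I) (F : I -> 'rV[R]_d) :
  norm2 (\sum_(i <- r | P i) F i) <= \sum_(i <- r | P i) norm2 (F i).
Proof.
apply: (big_ind2 (fun x y => norm2 x <= y)) => //; first by rewrite norm2_0.
by move=> x1 x2 y1 y2 le1 le2; apply: le_trans (ler_norm2D _ _) (lerD le1 le2).
Qed.

End EuclideanNorm.

Lemma convex_comb_subr (R : pzRingType) (V : lmodType R) (I : finType)
    (w : I -> R) (v : I -> V) (x : V) :
  \sum_k w k = 1 -> \sum_k w k *: v k - x = \sum_k w k *: (v k - x).
Proof.
move=> w_sum1; rewrite -[x in _ - x]scale1r -w_sum1 scaler_suml -sumrB.
by apply: eq_bigr => k _; rewrite scalerBr.
Qed.

Section ConvexCombination.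
Context {R : realType} {d : nat} {I : finType} {w : I -> R}.
Hypotheses (w_ge0 : forall k, 0 <= w k) (w_sum1 : \sum_k w k = 1).

Lemma ler_norm2_convex (v : I -> 'rV[R]_d) (delta : R) :
  (forall k, norm2 (v k) <= delta) -> norm2 (\sum_k w k *: v k) <= delta.
Proof.
move=> v_le; apply: le_trans (ler_norm2_sum _ _ _) _.
rewrite -[delta]mul1r -w_sum1 mulr_suml; apply: ler_sum => k _.
by rewrite norm2Z ger0_norm // ler_wpM2l.
Qed.

Lemma ler_norm2_convex_subr (c : I -> 'rV[R]_d) (C : R) (s : I) :
  (forall k, norm2 (c k) <= C) ->
  norm2 (\sum_k w k *: c k - c s) <= 2 * C * (1 - w s).
Proof.
move=> c_le; rewrite convex_comb_subr //.
apply: le_trans (ler_norm2_sum _ _ _) _.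
rewrite (bigD1 s) //= subrr scaler0 norm2_0 add0r.
have -> : 1 - w s = \sum_(k | k != s) w k.
  by rewrite -w_sum1 (bigD1 s) //= addrC addrK.
rewrite mulr_sumr; apply: ler_sum => k _.
rewrite norm2Z ger0_norm // mulrC ler_wpM2r // mulr_natl.
by apply: le_trans (ler_norm2B _ _) _; rewrite mulr2n lerD.
Qed.

Lemma ler_norm2_convex_perturb_subr
    {o c : I -> 'rV[R]_d} {delta C : R} (s : I) :
  (forall k, norm2 (o k - c k) <= delta) -> (forall k, norm2 (c k) <= C) ->
  norm2 (\sum_k w k *: o k - c s) <= delta + 2 * C * (1 - w s).
Proof.
move=> oc_le c_le.
have -> : \sum_k w k *: o k - c s
    = \sum_k w k *: (o k - c k) + (\sum_k w k *: c k - c s).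
  rewrite addrA -big_split /=; congr (_ - _).
  by apply: eq_bigr => k _; rewrite -scalerDr subrK.
apply: le_trans (ler_norm2D _ _) (lerD _ _).
  exact: ler_norm2_convex.
exact: ler_norm2_convex_subr.
Qed.

End ConvexCombination.

Theorem proposition1 (R : realType) (dc L : nat) (K : 'I_L -> nat)
    (cc : forall l : 'I_L, 'I_(K l) -> 'rV[R]_dc)
    (o : forall l : 'I_L, 'I_(K l) -> 'rV[R]_dc)
    (w : forall l : 'I_L, 'I_(K l) -> R)
    (s : forall l : 'I_L, 'I_(K l))
    (delta C : R) :
  (1 <= L)%N ->
  (forall l, 1 <= K l)%N ->
  (forall l k, 0 <= w l k) ->
  (forall l, \sum_(k < K l) w l k = 1) ->
  (forall l (k : 'I_(K l)), w l k <= w l (s l)) ->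
  0 <= delta -> 0 <= C ->
  (forall l k, norm2 (o l k - cc l k) <= delta) ->
  (forall l k, norm2 (cc l k) <= C) ->
  let xhard := \sum_(l < L) cc l (s l) in
  let xsoft := \sum_(l < L) \sum_(k < K l) w l k *: o l k in
  let bound := L%:R * delta + 2 * C * \sum_(l < L) (1 - w l (s l)) in
  norm2 (xsoft - xhard) <= bound /\
  (forall x : 'rV[R]_dc, norm2 (x - xsoft) <= norm2 (x - xhard) + bound).
Proof.
move=> _ _ w_ge0 w_sum1 _ _ _ oc_le c_le xhard xsoft bound.
have soft_hard_le : norm2 (xsoft - xhard) <= bound.
  rewrite /xsoft /xhard -sumrB; apply: le_trans (ler_norm2_sum _ _ _) _.
  apply: le_trans (ler_sum _ (fun l _ => ler_norm2_convex_perturb_subr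
    (w_ge0 l) (w_sum1 l) (s l) (oc_le l) (c_le l))) _.
  rewrite /bound big_split /= sumr_const card_ord -mulr_sumr.
  by rewrite -[delta *+ L]mulr_natl.
split=> // x.
have -> : x - xsoft = (x - xhard) - (xsoft - xhard).
  by rewrite opprB addrA subrK.
by apply: le_trans (ler_norm2B _ _) _; rewrite lerD.
Qed.
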